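(* Let $\mathcal{D}$ be a category with pullbacks and $(\mathcal{E},\mathcal{M})$ a stable orthogonal factorization system on $\mathcal{D}$, and let $\mathcal{A}$ be any category. Then the componentwise lifting of $(\mathcal{E},\mathcal{M})$ to $[\mathcal{A},\mathcal{D}]$ (natural transformations all of whose components are in $\mathcal{E}$, respectively in $\mathcal{M}$) restricts to an orthogonal factorization system on $\mathrm{CartNt}[\mathcal{A},\mathcal{D}]$, the category of all functors $\mathcal{A}\to\mathcal{D}$ and cartesian natural transformations.
   Context: An orthogonal factorization system $(\mathcal{E},\mathcal{M})$: both classes contain all isomorphisms and are closed under composition; each commuting square $g\circ e = m\circ f$ with $e\in\mathcal{E}$, $m\in\mathcal{M}$ has a unique diagonal $d$ with $d\circ e=f$, $m\circ d=g$; every morphism factors as $m\circ e$ with $e\in\mathcal{E}$, $m\in\mathcal{M}$. It is stable if $\mathcal{E}$ is closed under pullback along arbitrary morphisms. The componentwise lifting is an orthogonal factorization system on $[\mathcal{A},\mathcal{D}]$, with factorizations computed componentwise. A natural transformation is cartesian if all of its naturality squares are pullbacks. *)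

From Stdlib Require Import ProofIrrelevance FunctionalExtensionality.
Set Implicit Arguments.

Record Category := {
  ob :> Type;
  hom : ob -> ob -> Type;
  idm : forall a, hom a a;
  comp : forall a b c, hom b c -> hom a b -> hom a c;
  comp_idl : forall a b (f : hom a b), comp (idm b) f = f;
  comp_idr : forall a b (f : hom a b), comp f (idm a) = f;
  comp_assoc : forall a b c d (f : hom a b) (g : hom b c) (h : hom c d),
      comp h (comp g f) = comp (comp h g) f
}.
Arguments hom {_} _ _.
Arguments idm {_} _.
Arguments comp {_ _ _ _} _ _.

Record Functor (A D : Category) := {
  fobj :> A -> D;
  fmap : forall a b, hom a b -> hom (fobj a) (fobj b);
  fmap_id : forall a, fmap a a (idm a) = idm (fobj a);
  fmap_comp : forall a b c (f : hom a b) (g : hom b c),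
      fmap a c (comp g f) = comp (fmap b c g) (fmap a b f)
}.
Arguments fmap {A D} _ {a b} _.

Record NatTrans (A D : Category) (F G : Functor A D) := {
  ntc :> forall a, hom (F a) (G a);
  nt_natural : forall a b (f : hom a b),
      comp (fmap G f) (ntc a) = comp (ntc b) (fmap F f)
}.

(** * Pullbacks.  The square
       P --p1--> X
       |p2       |f
       v         v
       Y --g---> Z
    is a pullback. *)
Definition is_pullback (C : Category) (P X Y Z : C)
  (p1 : hom P X) (p2 : hom P Y) (f : hom X Z) (g : hom Y Z) : Prop :=
  comp f p1 = comp g p2 /\
  forall (Q : C) (q1 : hom Q X) (q2 : hom Q Y), comp f q1 = comp g q2 ->
    exists! u : hom Q P, comp p1 u = q1 /\ comp p2 u = q2.

Arguments is_pullback {C P X Y Z} p1 p2 f g.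

Definition has_pullbacks (C : Category) : Prop :=
  forall (X Y Z : C) (f : hom X Z) (g : hom Y Z),
    exists (P : C) (p1 : hom P X) (p2 : hom P Y), is_pullback p1 p2 f g.

Section OFS.
Variables (ob : Type) (hom : ob -> ob -> Type)
  (comp : forall a b c, hom b c -> hom a b -> hom a c)
  (idm : forall a, hom a a).
Arguments comp {a b c}.

Definition is_iso a b (f : hom a b) : Prop :=
  exists g : hom b a, comp g f = idm a /\ comp f g = idm b.

Definition is_OFS (E M : forall a b, hom a b -> Prop) : Prop :=
  (forall a b (f : hom a b), is_iso f -> E a b f) /\
  (forall a b (f : hom a b), is_iso f -> M a b f) /\
  (forall a b c (f : hom a b) (g : hom b c), E a b f -> E b c g -> E a c (comp g f)) /\
  (forall a b c (f : hom a b) (g : hom b c), M a b f -> M b c g -> M a c (comp g f)) /\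
  (forall a b c d (e : hom a b) (m : hom c d) (f : hom a c) (g : hom b d),
      E a b e -> M c d m -> comp g e = comp m f ->
      exists! dg : hom b c, comp dg e = f /\ comp m dg = g) /\
  (forall a b (h : hom a b),
      exists c (e : hom a c) (m : hom c b), E a c e /\ M c b m /\ comp m e = h).
End OFS.
Arguments is_iso {ob hom} comp idm {a b} f.
Arguments is_OFS {ob hom} comp idm E M.

Definition stable (C : Category) (E : forall a b : C, hom a b -> Prop) : Prop :=
  forall (P X Y Z : C) (p1 : hom P X) (p2 : hom P Y) (e : hom X Z) (g : hom Y Z),
    is_pullback p1 p2 e g -> E X Z e -> E P Y p2.

Definition cartesian (A D : Category) (F G : Functor A D) (eta : NatTrans F G) : Prop :=
  forall (a b : A) (f : hom a b),
    is_pullback (eta a) (fmap F f) (fmap G f) (eta b).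

Definition nt_id (A D : Category) (F : Functor A D) : NatTrans F F.
Proof.
  refine {| ntc := fun a => idm (F a) |}.
  intros a b f. now rewrite comp_idl, comp_idr.
Defined.

Definition nt_comp (A D : Category) (F G H : Functor A D)
  (beta : NatTrans G H) (alpha : NatTrans F G) : NatTrans F H.
Proof.
  refine {| ntc := fun a => comp (beta a) (alpha a) |}.
  intros a b f.
  rewrite comp_assoc, nt_natural, <- comp_assoc, nt_natural, comp_assoc.
  reflexivity.
Defined.

Lemma cartesian_id (A D : Category) (F : Functor A D) : cartesian (nt_id F).
Proof.
  intros a b f; simpl; split.
  - now rewrite comp_idl, comp_idr.
  - intros Q q1 q2 Hq. rewrite comp_idl in Hq.
    exists q1. split.
    + split; [apply comp_idl | now rewrite Hq].
    + intros u [Hu _]. now rewrite comp_idl in Hu.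
Qed.

Lemma cartesian_comp (A D : Category) (F G H : Functor A D)
  (beta : NatTrans G H) (alpha : NatTrans F G) :
  cartesian beta -> cartesian alpha -> cartesian (nt_comp beta alpha).
Proof.
  intros Hb Ha a b f; simpl.
  destruct (Hb a b f) as [Sb Ub]. destruct (Ha a b f) as [Sa Ua].
  split.
  - rewrite comp_assoc, Sb, <- comp_assoc, Sa, comp_assoc. reflexivity.
  - intros Q q1 q2 Hq.
    rewrite <- comp_assoc in Hq.
    destruct (Ub Q q1 (comp (alpha b) q2) Hq) as [v [[Hv1 Hv2] Hvu]].
    destruct (Ua Q v q2 Hv2) as [u [[Hu1 Hu2] Huu]].
    exists u. split.
    + split; [now rewrite <- comp_assoc, Hu1 | exact Hu2].
    + intros u' [H1 H2]. apply Huu. split; [|exact H2].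
      symmetry. apply Hvu. split.
      * now rewrite comp_assoc.
      * rewrite comp_assoc, Sa, <- comp_assoc, H2. reflexivity.
Qed.

Definition CartHom (A D : Category) (F G : Functor A D) : Type :=
  { eta : NatTrans F G | cartesian eta }.

Definition CartId (A D : Category) (F : Functor A D) : CartHom F F :=
  exist _ (nt_id F) (cartesian_id F).

Definition CartComp (A D : Category) (F G H : Functor A D)
  (beta : CartHom G H) (alpha : CartHom F G) : CartHom F H :=
  exist _ (nt_comp (proj1_sig beta) (proj1_sig alpha))
    (cartesian_comp (proj2_sig beta) (proj2_sig alpha)).

Definition cart_lift (A D : Category) (K : forall a b : D, hom a b -> Prop)
  (F G : Functor A D) (eta : CartHom F G) : Prop :=
  forall a : A, K (F a) (G a) (proj1_sig eta a).
Arguments cart_lift {A D} K F G eta.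
Arguments stable {C} E.

(** Components of a diagonal filler or of a factorization in the functor
    category are chosen componentwise; naturality and functoriality then come
    from the uniqueness of diagonals.  Cartesianness of the diagonal and of the
    [E]-part follows from pullback pasting, since their composite with a
    cartesian [M]-part is cartesian.  The real work is cartesianness of the
    [M]-part: for [u : a -> b], compare [ma] with the pullback [p] of [mb] along
    [G u].  The induced map [j] from [F a] to that pullback is a pullback of
    [eb], hence in [E] by stability, so [p j] and [ma ea] are two
    factorizations of [h a] and the comparison map between them is an
    isomorphism. *)

From Stdlib Require Import ProofIrrelevance FunctionalExtensionality IndefiniteDescription.

Section Pullbacks.
Context {C : Category}.

Lemma is_pullback_sym {P X Y Z : C} {p1 : hom P X} {p2 : hom P Y}
  {f : hom X Z} {g : hom Y Z} :
  is_pullback p1 p2 f g -> is_pullback p2 p1 g f.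
Proof.
  intros [Hsq Huniv]; split; [now symmetry|].
  intros Q q1 q2 Hq.
  destruct (Huniv Q q2 q1 (eq_sym Hq)) as [u [[H1 H2] Hu]].
  exists u; split; [now split|].
  intros u' [H1' H2']; now apply Hu.
Qed.

Lemma is_pullback_jointly_monic {P X Y Z Q : C} {p1 : hom P X} {p2 : hom P Y}
  {f : hom X Z} {g : hom Y Z} {x y : hom Q P} :
  is_pullback p1 p2 f g -> comp p1 x = comp p1 y -> comp p2 x = comp p2 y -> x = y.
Proof.
  intros [Hsq Huniv] H1 H2.
  assert (Hq : comp f (comp p1 y) = comp g (comp p2 y)).
  { now rewrite !comp_assoc, Hsq. }
  destruct (Huniv Q _ _ Hq) as [u [_ Hu]].
  transitivity u; [symmetry|]; now apply Hu.
Qed.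

(** The squares are read off
       A1 --x1--> B1 --y1--> C1
       |a         |b         |c
       A2 --x2--> B2 --y2--> C2 *)
Lemma is_pullback_pasting_left {A1 B1 C1 A2 B2 C2 : C} {x1 : hom A1 B1}
  {y1 : hom B1 C1} {a : hom A1 A2} {b : hom B1 B2} {c : hom C1 C2}
  {x2 : hom A2 B2} {y2 : hom B2 C2} :
  comp b x1 = comp x2 a -> is_pullback y1 b c y2 ->
  is_pullback (comp y1 x1) a c (comp y2 x2) -> is_pullback x1 a b x2.
Proof.
  intros Hsq Hright [_ Houter]. split; [exact Hsq|].
  intros Q q1 q2 Hq.
  assert (Hq' : comp c (comp y1 q1) = comp (comp y2 x2) q2).
  { rewrite comp_assoc, (proj1 Hright), <- comp_assoc, Hq, comp_assoc.
    reflexivity. }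
  destruct (Houter Q _ _ Hq') as [v [[Hv1 Hv2] Hv]].
  exists v. split; [split; [|exact Hv2]|].
  - apply (is_pullback_jointly_monic Hright).
    + now rewrite comp_assoc.
    + rewrite comp_assoc, Hsq, <- comp_assoc, Hv2. now symmetry.
  - intros v' [H1 H2]. apply Hv. split; [|exact H2].
    now rewrite <- comp_assoc, H1.
Qed.

Lemma is_pullback_precomp_iso {P X Y Z K : C} {p1 : hom P X} {p2 : hom P Y}
  {f : hom X Z} {g : hom Y Z} {k : hom K P} :
  is_pullback p1 p2 f g -> is_iso (@comp C) (@idm C) k ->
  is_pullback (comp p1 k) (comp p2 k) f g.
Proof.
  intros [Hsq Huniv] [l [Hlk Hkl]]. split.
  - now rewrite !comp_assoc, Hsq.
  - intros Q q1 q2 Hq.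
    destruct (Huniv Q q1 q2 Hq) as [z [[Hz1 Hz2] Hz]].
    assert (Hkz : comp k (comp l z) = z) by now rewrite comp_assoc, Hkl, comp_idl.
    exists (comp l z). split; [split|].
    + now rewrite <- comp_assoc, Hkz.
    + now rewrite <- comp_assoc, Hkz.
    + intros w [H1 H2].
      assert (Hw : z = comp k w) by (apply Hz; split; now rewrite comp_assoc).
      now rewrite Hw, comp_assoc, Hlk, comp_idl.
Qed.

End Pullbacks.

Definition orthogonal (ob : Type) (hom : ob -> ob -> Type)
  (comp : forall a b c, hom b c -> hom a b -> hom a c)
  (E M : forall a b, hom a b -> Prop) : Prop :=
  forall a b c d (e : hom a b) (m : hom c d) (f : hom a c) (g : hom b d),
    E a b e -> M c d m -> comp _ _ _ g e = comp _ _ _ m f ->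
    exists! dg : hom b c, comp _ _ _ dg e = f /\ comp _ _ _ m dg = g.
Arguments orthogonal {ob hom} comp E M.

Section Orthogonality.
Context {D : Category} {E M : forall a b : D, hom a b -> Prop}.
Hypothesis orth : orthogonal (@comp D) E M.

Definition diagonal {a b c d} {e : hom a b} {m : hom c d} {f : hom a c} {g : hom b d}
  (He : E a b e) (Hm : M c d m) (Hsq : comp g e = comp m f) : hom b c :=
  proj1_sig (constructive_indefinite_description _ (orth _ _ _ _ _ _ _ _ He Hm Hsq)).

Lemma diagonal_spec {a b c d} {e : hom a b} {m : hom c d} {f : hom a c} {g : hom b d}
  (He : E a b e) (Hm : M c d m) (Hsq : comp g e = comp m f) :
  comp (diagonal He Hm Hsq) e = f /\ comp m (diagonal He Hm Hsq) = g.
Proof.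
  exact (proj1 (proj2_sig (constructive_indefinite_description _
                             (orth _ _ _ _ _ _ _ _ He Hm Hsq)))).
Qed.

Lemma orthogonal_cancel {a b c d} {e : hom a b} {m : hom c d} {x y : hom b c} :
  E a b e -> M c d m -> comp x e = comp y e -> comp m x = comp m y -> x = y.
Proof.
  intros He Hm Hxe Hmx.
  assert (Hsq : comp (comp m x) e = comp m (comp x e)) by now rewrite comp_assoc.
  destruct (orth _ _ _ _ _ _ _ _ He Hm Hsq) as [z [_ Hz]].
  transitivity z; [symmetry|]; apply Hz; auto.
Qed.

Lemma factorization_choice
  (fact : forall a b (h : hom a b),
      exists c (e : hom a c) (m : hom c b), E a c e /\ M c b m /\ comp m e = h)
  {X : Type} {s t : X -> D} (h : forall x, hom (s x) (t x)) :
  exists (I : X -> D) (e : forall x, hom (s x) (I x)) (m : forall x, hom (I x) (t x)),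
    (forall x, E _ _ (e x)) /\ (forall x, M _ _ (m x)) /\ (forall x, comp (m x) (e x) = h x).
Proof.
  assert (pick : forall x, {c : D & {e : hom (s x) c & {m : hom c (t x) |
                   E _ _ e /\ M _ _ m /\ comp m e = h x}}}).
  { intro x.
    destruct (constructive_indefinite_description _ (fact _ _ (h x))) as [c Hc].
    destruct (constructive_indefinite_description _ Hc) as [e He].
    destruct (constructive_indefinite_description _ He) as [m Hm].
    exact (existT _ c (existT _ e (exist _ m Hm))). }
  exists (fun x => projT1 (pick x)), (fun x => projT1 (projT2 (pick x))),
    (fun x => proj1_sig (projT2 (projT2 (pick x)))).
  repeat split; intro x; apply (proj2_sig (projT2 (projT2 (pick x)))).
Qed.

Hypotheses (HD : has_pullbacks D) (stab : stable E).

Lemma factorization_square_pullback {Fa Fb Ia Ib Ga Gb : D}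
  {ea : hom Fa Ia} {ma : hom Ia Ga} {eb : hom Fb Ib} {mb : hom Ib Gb}
  {x : hom Fa Fb} {t : hom Ia Ib} {y : hom Ga Gb} :
  E _ _ ea -> M _ _ ma -> E _ _ eb -> M _ _ mb ->
  comp t ea = comp eb x -> comp y ma = comp mb t ->
  is_pullback (comp ma ea) x y (comp mb eb) -> is_pullback ma t y mb.
Proof.
  intros Hea Hma Heb Hmb Hleft Hright Houter.
  destruct (HD _ _ _ y mb) as (P & p & q & Hpb).
  destruct (proj2 Hpb _ _ _ Hright) as [k [[Hpk Hqk] _]].
  set (j := comp k ea).
  assert (Hpj : comp p j = comp ma ea) by (unfold j; now rewrite comp_assoc, Hpk).
  assert (Hqj : comp q j = comp eb x) by (unfold j; now rewrite comp_assoc, Hqk).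
  assert (Hj : E _ _ j).
  { apply (stab _ _ _ _ x j eb q); [|exact Heb].
    apply is_pullback_sym, (is_pullback_pasting_left Hqj Hpb).
    now rewrite Hpj. }
  set (l := diagonal Hj Hma Hpj).
  destruct (diagonal_spec Hj Hma Hpj) as [Hlj Hml]; fold l in Hlj, Hml.
  assert (Hlk : comp l k = idm Ia).
  { apply (orthogonal_cancel Hea Hma).
    - now rewrite <- comp_assoc, comp_idl.
    - now rewrite comp_assoc, Hml, Hpk, comp_idr. }
  assert (Htl : comp t l = q).
  { apply (orthogonal_cancel Hj Hmb).
    - now rewrite <- comp_assoc, Hlj, Hleft.
    - now rewrite comp_assoc, <- Hright, <- comp_assoc, Hml, (proj1 Hpb). }
  assert (Hkl : comp k l = idm P).
  { apply (is_pullback_jointly_monic Hpb).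
    - now rewrite comp_assoc, Hpk, comp_idr.
    - now rewrite comp_assoc, Hqk, comp_idr. }
  rewrite <- Hpk, <- Hqk.
  apply (is_pullback_precomp_iso Hpb). now exists l.
Qed.

End Orthogonality.

Section CartesianTransformations.
Context {A D : Category}.

Lemma cart_hom_eqP {F G : Functor A D} (x y : CartHom F G) :
  x = y <-> forall a, proj1_sig x a = proj1_sig y a.
Proof.
  split; [now intros ->|].
  destruct x as [[x xn] xc], y as [[y yn] yc]; simpl; intro Hxy.
  assert (x = y) by (apply functional_extensionality_dep; exact Hxy). subst y.
  assert (xn = yn) by apply proof_irrelevance. subst yn.
  f_equal. apply proof_irrelevance.
Qed.

Lemma cart_iso_component {F G : Functor A D} (eta : CartHom F G) (a : A) :
  is_iso (@CartComp A D) (@CartId A D) eta -> is_iso (@comp D) (@idm D) (proj1_sig eta a).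
Proof.
  intros [theta [H1 H2]]. exists (proj1_sig theta a).
  split; [exact (proj1 (cart_hom_eqP _ _) H1 a) | exact (proj1 (cart_hom_eqP _ _) H2 a)].
Qed.


Lemma cart_lift_iso (K : forall a b : D, hom a b -> Prop) :
  (forall a b (f : hom a b), is_iso (@comp D) (@idm D) f -> K a b f) ->
  forall (F G : Functor A D) (eta : CartHom F G),
    is_iso (@CartComp A D) (@CartId A D) eta -> cart_lift K F G eta.
Proof. intros HK F G eta Heta a. apply HK, cart_iso_component, Heta. Qed.

Lemma cart_lift_comp (K : forall a b : D, hom a b -> Prop) :
  (forall a b c (f : hom a b) (g : hom b c), K a b f -> K b c g -> K a c (comp g f)) ->
  forall (F G H : Functor A D) (f : CartHom F G) (g : CartHom G H),
    cart_lift K F G f -> cart_lift K G H g -> cart_lift K F H (CartComp g f).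
Proof. intros HK F G H f g Hf Hg a. apply HK; [apply Hf | apply Hg]. Qed.

Context {E M : forall a b : D, hom a b -> Prop}.
Hypothesis orth : orthogonal (@comp D) E M.

Section Diagonal.
Context {F G H K : Functor A D} {e : CartHom F G} {m : CartHom H K}
  {f : CartHom F H} {g : CartHom G K}.
Hypotheses (He : cart_lift E F G e) (Hm : cart_lift M H K m)
  (Hsq : CartComp g e = CartComp m f).

Definition cart_diagonal_component (a : A) : hom (G a) (H a) :=
  diagonal orth (He a) (Hm a) (proj1 (cart_hom_eqP _ _) Hsq a).

Lemma cart_diagonal_component_spec (a : A) :
  comp (cart_diagonal_component a) (proj1_sig e a) = proj1_sig f a /\
  comp (proj1_sig m a) (cart_diagonal_component a) = proj1_sig g a.
Proof. apply diagonal_spec. Qed.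

Lemma cart_diagonal_natural (a b : A) (u : hom a b) :
  comp (fmap H u) (cart_diagonal_component a) =
  comp (cart_diagonal_component b) (fmap G u).
Proof.
  destruct (cart_diagonal_component_spec a) as [Hfa Hga].
  destruct (cart_diagonal_component_spec b) as [Hfb Hgb].
  apply (orthogonal_cancel orth (He a) (Hm b)).
  - rewrite <- !comp_assoc, Hfa, (nt_natural (proj1_sig e)), comp_assoc, Hfb.
    apply (nt_natural (proj1_sig f)).
  - rewrite !comp_assoc, <- (nt_natural (proj1_sig m)), Hgb, <- comp_assoc, Hga.
    apply (nt_natural (proj1_sig g)).
Qed.

Definition cart_diagonal_nt : NatTrans G H :=
  {| ntc := cart_diagonal_component; nt_natural := cart_diagonal_natural |}.

Lemma cart_diagonal_cartesian : cartesian cart_diagonal_nt.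
Proof.
  intros a b u.
  apply (is_pullback_pasting_left (cart_diagonal_natural a b u) (proj2_sig m a b u)).
  rewrite (proj2 (cart_diagonal_component_spec a)), (proj2 (cart_diagonal_component_spec b)).
  exact (proj2_sig g a b u).
Qed.

Definition cart_diagonal : CartHom G H := exist _ _ cart_diagonal_cartesian.

End Diagonal.

Lemma cart_orthogonal : orthogonal (@CartComp A D) (cart_lift E) (cart_lift M).
Proof.
  intros F G H K e m f g He Hm Hsq.
  exists (cart_diagonal He Hm Hsq). split.
  - split; apply cart_hom_eqP; intro a; apply (cart_diagonal_component_spec He Hm Hsq a).
  - intros d [Hde Hmd]. apply cart_hom_eqP; intro a.
    destruct (cart_diagonal_component_spec He Hm Hsq a) as [Hfa Hga].
    apply (orthogonal_cancel orth (He a) (Hm a)); simpl.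
    + rewrite Hfa. exact (eq_sym (proj1 (cart_hom_eqP _ _) Hde a)).
    + rewrite Hga. exact (eq_sym (proj1 (cart_hom_eqP _ _) Hmd a)).
Qed.


Hypotheses (HD : has_pullbacks D) (stab : stable E).

Section Factorization.
Context {F G : Functor A D} {h : CartHom F G} {I : A -> D}
  {ee : forall a, hom (F a) (I a)} {mm : forall a, hom (I a) (G a)}.
Hypotheses (HE : forall a, E _ _ (ee a)) (HM : forall a, M _ _ (mm a))
  (Hh : forall a, comp (mm a) (ee a) = proj1_sig h a).

Lemma image_fmap_square {a b : A} (u : hom a b) :
  comp (comp (fmap G u) (mm a)) (ee a) = comp (mm b) (comp (ee b) (fmap F u)).
Proof.
  rewrite <- comp_assoc, Hh, comp_assoc, Hh.
  apply (nt_natural (proj1_sig h)).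
Qed.

Definition image_fmap (a b : A) (u : hom a b) : hom (I a) (I b) :=
  diagonal orth (HE a) (HM b) (image_fmap_square u).

Lemma image_fmap_e {a b : A} (u : hom a b) :
  comp (image_fmap a b u) (ee a) = comp (ee b) (fmap F u).
Proof. apply diagonal_spec. Qed.

Lemma image_fmap_m {a b : A} (u : hom a b) :
  comp (mm b) (image_fmap a b u) = comp (fmap G u) (mm a).
Proof. apply diagonal_spec. Qed.

Lemma image_fmap_id (a : A) : image_fmap a a (idm a) = idm (I a).
Proof.
  apply (orthogonal_cancel orth (HE a) (HM a)).
  - now rewrite image_fmap_e, fmap_id, comp_idl, comp_idr.
  - now rewrite image_fmap_m, fmap_id, comp_idl, comp_idr.
Qed.

Lemma image_fmap_comp (a b c : A) (u : hom a b) (v : hom b c) :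
  image_fmap a c (comp v u) = comp (image_fmap b c v) (image_fmap a b u).
Proof.
  apply (orthogonal_cancel orth (HE a) (HM c)).
  - rewrite image_fmap_e, <- comp_assoc, image_fmap_e, comp_assoc, image_fmap_e.
    now rewrite fmap_comp, comp_assoc.
  - rewrite image_fmap_m, comp_assoc, image_fmap_m, <- comp_assoc, image_fmap_m.
    now rewrite fmap_comp, comp_assoc.
Qed.

Definition image_functor : Functor A D :=
  {| fobj := I; fmap := image_fmap; fmap_id := image_fmap_id; fmap_comp := image_fmap_comp |}.

Definition image_e : NatTrans F image_functor :=
  {| ntc := ee : forall a, hom (F a) (image_functor a);
     nt_natural := fun a b u => image_fmap_e u |}.

Definition image_m : NatTrans image_functor G :=
  {| ntc := mm : forall a, hom (image_functor a) (G a);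
     nt_natural := fun a b u => eq_sym (image_fmap_m u) |}.

Lemma image_m_cartesian : cartesian image_m.
Proof.
  intros a b u.
  apply (factorization_square_pullback orth HD stab (HE a) (HM a) (HE b) (HM b)
           (image_fmap_e u) (eq_sym (image_fmap_m u))).
  rewrite !Hh. exact (proj2_sig h a b u).
Qed.

Lemma image_e_cartesian : cartesian image_e.
Proof.
  intros a b u.
  apply (is_pullback_pasting_left (image_fmap_e u) (image_m_cartesian a b u)).
  rewrite !Hh. exact (proj2_sig h a b u).
Qed.

Lemma cart_factorization_of_components :
  exists (H : Functor A D) (e : CartHom F H) (m : CartHom H G),
    cart_lift E F H e /\ cart_lift M H G m /\ CartComp m e = h.
Proof.
  exists image_functor, (exist _ image_e image_e_cartesian),
    (exist _ image_m image_m_cartesian).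
  split; [exact HE | split; [exact HM|]].
  apply cart_hom_eqP; exact Hh.
Qed.

End Factorization.

End CartesianTransformations.

Theorem lemma4p7 (A D : Category) (E M : forall a b : D, hom a b -> Prop) :
  has_pullbacks D ->
  is_OFS (@comp D) (@idm D) E M ->
  stable E ->
  is_OFS (@CartComp A D) (@CartId A D) (cart_lift E) (cart_lift M).
Proof.
  intros HD [isoE [isoM [compE [compM [orth fact]]]]] stab.
  repeat split.
  - exact (cart_lift_iso E isoE).
  - exact (cart_lift_iso M isoM).
  - exact (cart_lift_comp E compE).
  - exact (cart_lift_comp M compM).
  - exact (cart_orthogonal orth).
  - intros F G h.
    destruct (factorization_choice fact (fun a => proj1_sig h a))
      as (I & e & m & He & Hm & Hh).
    exact (cart_factorization_of_components orth HD stab He Hm Hh).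
Qed.
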